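(* Let $\tau,t\in\mathbb{R}$ and let $\beta_n=\beta_n(\tau,t)$ be the recurrence coefficients of the monic orthogonal polynomials for the weight $\omega(x;\tau,t)=\exp(-x^6+\tau x^4+tx^2)$ on $\mathbb{R}$. Then, for $n\ge1$, $\beta_n$ and $\beta_{n+1}$ satisfy \begin{align*} &\frac{\partial^2\beta_n}{\partial t^2}-3\left(\beta_n+\beta_{n+1}-\tfrac29\tau\right)\frac{\partial\beta_n}{\partial t}+\beta_n^3+6\beta_n^2\beta_{n+1}+3\beta_n\beta_{n+1}^2-\tfrac23\tau\beta_n(\beta_n+2\beta_{n+1})-\tfrac13t\beta_n=\tfrac16n,\\ &\frac{\partial^2\beta_{n+1}}{\partial t^2}+3\left(\beta_n+\beta_{n+1}-\tfrac29\tau\right)\frac{\partial\beta_{n+1}}{\partial t}+\beta_{n+1}^3+6\beta_{n+1}^2\beta_n+3\beta_{n+1}\beta_n^2-\tfrac23\tau\beta_{n+1}(2\beta_n+\beta_{n+1})-\tfrac13t\beta_{n+1}=\tfrac16(n+1). \end{align*}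
   Context: The monic orthogonal polynomials satisfy $P_{n+1}(x)=xP_n(x)-\beta_nP_{n-1}(x)$ with $P_{-1}=0$, $P_0=1$, where $\beta_n>0$ for $n\ge1$. The convention $\beta_0=\beta_{-1}=0$ is used. *)

From Stdlib Require Import Reals.
From Coquelicot Require Import Coquelicot.
Open Scope R_scope.

Definition omega (tau t x : R) : R := exp (- x ^ 6 + tau * x ^ 4 + t * x ^ 2).

Fixpoint psum (c : nat -> R) (n : nat) (x : R) : R :=
  match n with
  | O => 0
  | S m => psum c m x + c m * x ^ m
  end.

Definition monic_poly_fun (n : nat) (p : R -> R) : Prop :=
  exists c : nat -> R, forall x : R, p x = x ^ n + psum c n x.

Definition is_RInt_R (f : R -> R) (v : R) : Prop :=
  is_RInt_gen f (Rbar_locally m_infty) (Rbar_locally p_infty) v.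

(* With h_k = int P_k^2 omega, differentiating under the integral sign (d/dt omega = x^2 omega)
   and using that d/dt P_k has degree < k gives
   h_k' = int x^2 P_k^2 omega = (beta_k + beta_(k+1)) h_k;  since beta_k = h_k / h_(k-1), this is
   the Toda equation beta_k' = beta_k (beta_(k+1) - beta_(k-1)).
   Integrating (P_(n+1) P_n omega)' over the line gives the string equation
   (n + 1) h_n = int P_(n+1) P_n (6 x^5 - 4 tau x^3 - 2 t x) omega.  By the three-term recurrence,
   int P_i P_j x^m omega = W_m(i, j) h_j, where W_m(i, j) sums the m-step walks from i to j whose
   steps up weigh 1 and whose steps down from k weigh beta_k; so the string equation is a polynomial
   identity in beta_(n-1), ..., beta_(n+3).  The two equations of the theorem are the derivatives of
   the Toda equations for beta_n and beta_(n+1), simplified by the string equations for the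
   constants n and n + 1.
   All integrals are finite combinations of the moments int x^k omega, which converge because
   (1 + x^2) |x|^k omega is bounded, and whose t-derivative is the moment of order k + 2. *)

From Stdlib Require Import Reals Lra Lia Classical ZArith.
From Coquelicot Require Import Coquelicot.
Open Scope R_scope.

(** * Integrals over the real line *)

Lemma is_RInt_R_ext (f g : R -> R) (l : R) :
  (forall x, f x = g x) -> is_RInt_R f l -> is_RInt_R g l.
Proof.
  intros Hfg Hf. exact (is_RInt_gen_ext f g l (filter_forall _ (fun _ x _ => Hfg x)) Hf).
Qed.

Lemma is_RInt_R_unique (f : R -> R) (l l' : R) : is_RInt_R f l -> is_RInt_R f l' -> l = l'.
Proof.
  intros H H'.
  apply (is_RInt_gen_unique (V := R_CompleteNormedModule) f) in H, H'. congruence.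
Qed.

Lemma is_RInt_R_plus (f g : R -> R) (lf lg : R) :
  is_RInt_R f lf -> is_RInt_R g lg -> is_RInt_R (fun x => f x + g x) (lf + lg).
Proof. intros Hf Hg. exact (is_RInt_gen_plus f g lf lg Hf Hg). Qed.

Lemma is_RInt_R_minus (f g : R -> R) (lf lg : R) :
  is_RInt_R f lf -> is_RInt_R g lg -> is_RInt_R (fun x => f x - g x) (lf - lg).
Proof. intros Hf Hg. exact (is_RInt_gen_minus f g lf lg Hf Hg). Qed.

Lemma is_RInt_R_scal (f : R -> R) (a l : R) :
  is_RInt_R f l -> is_RInt_R (fun x => a * f x) (a * l).
Proof. intros Hf. exact (is_RInt_gen_scal f a l Hf). Qed.

Lemma is_RInt_R_RInt_gen (f : R -> R) :
  ex_RInt_gen f (Rbar_locally m_infty) (Rbar_locally p_infty) ->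
  is_RInt_R f (RInt_gen f (Rbar_locally m_infty) (Rbar_locally p_infty)).
Proof. intros Hf. exact (RInt_gen_correct (V := R_CompleteNormedModule) f Hf). Qed.

Lemma filter_prod_le_m_p_infty :
  filter_prod (Rbar_locally m_infty) (Rbar_locally p_infty) (fun ab : R * R => fst ab <= snd ab).
Proof.
  apply Filter_prod with (fun a => a < 0) (fun b => 0 < b); try (exists 0; auto).
  intros a b Ha Hb; simpl; lra.
Qed.

Lemma is_RInt_R_Rabs_le (f g : R -> R) (lf lg : R) :
  (forall x, Rabs (f x) <= g x) -> is_RInt_R f lf -> is_RInt_R g lg -> Rabs lf <= lg.
Proof.
  intros Hfg Hf Hg.
  exact (RInt_gen_norm (V := R_CompleteNormedModule) f g lf lg filter_prod_le_m_p_infty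
           (filter_forall _ (fun _ x _ => Hfg x)) Hf Hg).
Qed.

Lemma filterlim_RInt_of_is_RInt_R (f : R -> R) (l : R) :
  is_RInt_R f l ->
  filterlim (fun ab : R * R => RInt f (fst ab) (snd ab))
    (filter_prod (Rbar_locally m_infty) (Rbar_locally p_infty)) (locally l).
Proof.
  intros Hl P [eps HP].
  specialize (Hl _ (locally_ball l eps)). unfold filtermapi in Hl.
  unfold filtermap. revert Hl. apply filter_imp. intros [a b] [z [Hz Hball]]; simpl in *.
  apply HP. rewrite (is_RInt_unique f a b z Hz). exact Hball.
Qed.

Lemma ex_RInt_continuous_R (f : R -> R) (a b : R) : (forall x, continuous f x) -> ex_RInt f a b.
Proof. intros Hc. apply (ex_RInt_continuous (V := R_CompleteNormedModule)); auto. Qed.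

Lemma RInt_subinterval_le (f : R -> R) (a a' b' b : R) :
  (forall x, continuous f x) -> (forall x, 0 <= f x) -> a <= a' <= b' -> b' <= b ->
  RInt f a' b' <= RInt f a b.
Proof.
  intros Hc Hf Ha Hb.
  rewrite <- (RInt_Chasles f a a' b), <- (RInt_Chasles f a' b' b)
    by auto using ex_RInt_continuous_R.
  assert (0 <= RInt f a a') by (apply RInt_ge_0; auto using ex_RInt_continuous_R; lra).
  assert (0 <= RInt f b' b) by (apply RInt_ge_0; auto using ex_RInt_continuous_R; lra).
  unfold plus; simpl; lra.
Qed.

Lemma is_RInt_R_gt0 (f : R -> R) (x0 l : R) :
  (forall x, continuous f x) -> (forall x, 0 <= f x) -> 0 < f x0 -> is_RInt_R f l -> 0 < l.
Proof.
  intros Hc Hf Hx0 Hl.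
  assert (Hnear : locally x0 (fun y => f x0 / 2 < f y)).
  { apply (Hc x0 (fun z => f x0 / 2 < z)).
    assert (Hpos : 0 < f x0 / 2) by lra.
    exists (mkposreal _ Hpos); intros y Hy.
    change (Rabs (y - f x0) < f x0 / 2) in Hy. apply Rabs_def2 in Hy. lra. }
  destruct Hnear as [d Hd]. pose proof (cond_pos d) as Hd0.
  set (a0 := x0 - d / 2); set (b0 := x0 + d / 2).
  assert (Hbump : d * (f x0 / 2) <= RInt f a0 b0).
  { replace (d * (f x0 / 2)) with (RInt (V := R_CompleteNormedModule) (fun _ => f x0 / 2) a0 b0)
      by (rewrite RInt_const; unfold a0, b0, scal; simpl; unfold mult; simpl;
          apply Rmult_eq_compat_r; lra).
    apply RInt_le; [unfold a0, b0; lra | apply ex_RInt_const | apply ex_RInt_continuous_R; auto |].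
    intros x Hx. left. apply Hd. change (Rabs (x - x0) < d).
    apply Rabs_def1; unfold a0, b0 in Hx; lra. }
  assert (Hle : Rbar_le (RInt f a0 b0) l).
  { apply (filterlim_le (F := filter_prod (Rbar_locally m_infty) (Rbar_locally p_infty))
             (fun _ => RInt f a0 b0) (fun ab => RInt f (fst ab) (snd ab))).
    - apply Filter_prod with (fun a => a < a0) (fun b => b0 < b);
        [exists a0 | exists b0 |]; auto.
      intros a b Ha Hb; simpl in *.
      apply RInt_subinterval_le; auto; [split |]; unfold a0, b0 in *; lra.
    - apply filterlim_const.
    - apply filterlim_RInt_of_is_RInt_R; exact Hl. }
  simpl in Hle. pose proof (Rmult_lt_0_compat d (f x0 / 2) Hd0 ltac:(lra)). lra.
Qed.

Lemma RInt_Cauchy_le (C a b : R) :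
  0 <= C -> a <= b -> RInt (fun x => C / (1 + x ^ 2)) a b <= C * PI.
Proof.
  intros HC Hab.
  assert (HF : is_RInt (fun x => C / (1 + x ^ 2)) a b (C * atan b - C * atan a)).
  { apply (is_RInt_derive (fun x => C * atan x)).
    - intros x _. auto_derive; [auto | field; nra].
    - intros x _. apply (ex_derive_continuous (K := R_AbsRing) (V := R_NormedModule)).
      auto_derive. nra. }
  rewrite (is_RInt_unique _ _ _ _ HF).
  pose proof (atan_bound a); pose proof (atan_bound b). nra.
Qed.

Lemma ex_RInt_gen_nonneg_le_Cauchy (f : R -> R) (C : R) :
  (forall x, continuous f x) -> (forall x, 0 <= f x <= C / (1 + x ^ 2)) ->
  ex_RInt_gen f (Rbar_locally m_infty) (Rbar_locally p_infty).
Proof.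
  intros Hc Hf.
  assert (HC : 0 <= C) by (specialize (Hf 0); simpl in Hf; lra).
  assert (Hbound : forall a b, a <= b -> RInt f a b <= C * PI).
  { intros a b Hab. eapply Rle_trans; [| apply (RInt_Cauchy_le C a b HC Hab)].
    apply RInt_le; auto using ex_RInt_continuous_R; [| intros; apply Hf].
    apply ex_RInt_continuous_R. intros x.
    apply (ex_derive_continuous (K := R_AbsRing) (V := R_NormedModule)). auto_derive. nra. }
  set (E := fun y => exists a b, a <= b /\ y = RInt f a b).
  destruct (completeness E) as [L [HLub HLleast]].
  { exists (C * PI). intros y (a & b & Hab & ->). auto. }
  { exists (RInt f 0 0), 0, 0. split; auto; lra. }
  exists L. intros P [eps HP].
  destruct (classic (exists a b, a <= b /\ L - eps < RInt f a b)) as [(a0 & b0 & Hab0 & Hgt)|Hno].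
  2:{ exfalso. assert (L <= L - eps) by (apply HLleast; intros y (a & b & Hab & ->);
        apply Rnot_lt_le; intros Hlt; apply Hno; exists a, b; auto).
      pose proof (cond_pos eps). lra. }
  apply Filter_prod with (fun a => a < a0) (fun b => b0 < b); [exists a0 | exists b0 |]; auto.
  intros a b Ha Hb; simpl in *. exists (RInt f a b). split.
  - apply (RInt_correct (V := R_CompleteNormedModule)), ex_RInt_continuous_R, Hc.
  - apply HP. change (Rabs (RInt f a b - L) < eps).
    assert (RInt f a b <= L) by (apply HLub; exists a, b; split; auto; lra).
    assert (RInt f a0 b0 <= RInt f a b)
      by (apply RInt_subinterval_le; auto; [intros; apply Hf | lra | lra]).
    apply Rabs_def1; lra.
Qed.

(* Domination by [C / (1 + x^2)], whose primitive is [C * atan x], makes a continuous function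
   integrable over the line and forces it to vanish at both infinities. *)
Definition decaying (f : R -> R) : Prop := exists C, forall x, (1 + x ^ 2) * Rabs (f x) <= C.

Lemma decaying_Rabs_le (f : R -> R) (C x : R) :
  (forall y, (1 + y ^ 2) * Rabs (f y) <= C) -> Rabs (f x) <= C / (1 + x ^ 2).
Proof.
  intros H. assert (Hp : 0 < 1 + x ^ 2) by nra.
  apply (Rmult_le_reg_r (1 + x ^ 2)); [exact Hp |].
  unfold Rdiv. rewrite Rmult_assoc, Rinv_l, Rmult_1_r by lra.
  rewrite Rmult_comm. apply H.
Qed.

Lemma decaying_le (f g : R -> R) : (forall x, Rabs (g x) <= Rabs (f x)) -> decaying f -> decaying g.
Proof.
  intros Hgf [C HC]. exists C. intros x. eapply Rle_trans; [| apply HC].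
  apply Rmult_le_compat_l; [nra | apply Hgf].
Qed.

Lemma decaying_ext (f g : R -> R) : (forall x, f x = g x) -> decaying f -> decaying g.
Proof. intros Hfg. apply decaying_le. intros x. rewrite Hfg. apply Rle_refl. Qed.

Lemma decaying_plus (f g : R -> R) : decaying f -> decaying g -> decaying (fun x => f x + g x).
Proof.
  intros [C HC] [D HD]. exists (C + D). intros x.
  pose proof (Rabs_triang (f x) (g x)). specialize (HC x). specialize (HD x). nra.
Qed.

Lemma decaying_scal (a : R) (f : R -> R) : decaying f -> decaying (fun x => a * f x).
Proof.
  intros [C HC]. exists (Rabs a * C). intros x. rewrite Rabs_mult.
  specialize (HC x). pose proof (Rabs_pos a). nra.
Qed.

Lemma ex_RInt_gen_decaying (f : R -> R) :
  (forall x, continuous f x) -> decaying f ->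
  ex_RInt_gen f (Rbar_locally m_infty) (Rbar_locally p_infty).
Proof.
  intros Hc [C HC].
  set (g := fun x => C / (1 + x ^ 2)).
  assert (Hgc : forall x, continuous g x).
  { intros x. apply (ex_derive_continuous (K := R_AbsRing) (V := R_NormedModule)).
    unfold g. auto_derive. nra. }
  assert (Hfg : forall x, Rabs (f x) <= g x) by (intros; apply decaying_Rabs_le, HC).
  destruct (ex_RInt_gen_nonneg_le_Cauchy (fun x => f x + g x) (2 * C)) as [l1 H1].
  { intros x. apply (continuous_plus f g); auto. }
  { intros x. specialize (Hfg x). apply Rabs_le_between in Hfg. unfold g in *. lra. }
  destruct (ex_RInt_gen_nonneg_le_Cauchy g C Hgc) as [l2 H2].
  { intros x. specialize (Hfg x). pose proof (Rabs_pos (f x)). unfold g in *. lra. }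
  exists (l1 - l2). apply (is_RInt_R_ext (fun x => (f x + g x) - g x)); [intros; ring |].
  apply (is_RInt_R_minus _ _ _ _ H1 H2).
Qed.

Lemma decaying_lim_infty (f : R -> R) : decaying f ->
  filterlim f (Rbar_locally p_infty) (locally 0) /\ filterlim f (Rbar_locally m_infty) (locally 0).
Proof.
  intros [C HC].
  assert (Hsmall : forall eps : posreal, forall x, C / eps < Rabs x -> ball 0 eps (f x)).
  { intros eps x Hx. change (Rabs (f x - 0) < eps). rewrite Rminus_0_r.
    pose proof (cond_pos eps). specialize (HC x).
    apply (Rmult_lt_compat_r eps) in Hx; [| lra]. unfold Rdiv in Hx.
    rewrite Rmult_assoc, Rinv_l, Rmult_1_r in Hx by lra.
    pose proof (Rabs_pos (f x)). pose proof (Rabs_pos x).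
    assert (Rabs x < 1 + x ^ 2) by (rewrite <- (pow2_abs x); nra). nra. }
  split; intros P [eps HP].
  - exists (Rabs (C / eps)). intros x Hx. apply HP, Hsmall.
    pose proof (Rle_abs (C / eps)). pose proof (Rle_abs x). lra.
  - exists (- Rabs (C / eps)). intros x Hx. apply HP, Hsmall.
    pose proof (Rle_abs (C / eps)).
    rewrite Rabs_left by (pose proof (Rabs_pos (C / eps)); lra). lra.
Qed.

Lemma is_RInt_R_derive_decaying (F dF : R -> R) (l : R) :
  (forall x, is_derive F x (dF x)) -> (forall x, continuous dF x) -> decaying F ->
  is_RInt_R dF l -> l = 0.
Proof.
  intros HD Hc Hdec Hl. destruct (decaying_lim_infty F Hdec) as [Hp Hm].
  assert (HDF : forall x, Derive F x = dF x) by (intros; apply is_derive_unique, HD).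
  apply (is_RInt_R_unique dF); [exact Hl |].
  apply (is_RInt_R_ext (Derive F)); auto.
  replace 0 with (0 - 0) by ring. apply (is_RInt_gen_Derive F 0 0); auto.
  - apply filter_forall. intros _ x _. eexists; apply HD.
  - apply filter_forall. intros _ x _. apply (continuous_ext dF); auto.
Qed.

Lemma is_derive_eq (f : R -> R) (x l l' : R) : is_derive f x l -> l = l' -> is_derive f x l'.
Proof. intros H <-. exact H. Qed.

Lemma is_derive_Rext (f g : R -> R) (x l : R) :
  (forall y, f y = g y) -> is_derive f x l -> is_derive g x l.
Proof. intros Hfg Hf. exact (is_derive_ext f g x l Hfg Hf). Qed.

Lemma is_derive_Rconst (a x : R) : is_derive (fun _ => a) x 0.
Proof. exact (is_derive_const a x). Qed.

Lemma is_derive_Rplus (f g : R -> R) (x df dg : R) :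
  is_derive f x df -> is_derive g x dg -> is_derive (fun y => f y + g y) x (df + dg).
Proof. intros Hf Hg. exact (is_derive_plus f g x df dg Hf Hg). Qed.

Lemma is_derive_Rminus (f g : R -> R) (x df dg : R) :
  is_derive f x df -> is_derive g x dg -> is_derive (fun y => f y - g y) x (df - dg).
Proof. intros Hf Hg. exact (is_derive_minus f g x df dg Hf Hg). Qed.

Lemma is_derive_Rmult (f g : R -> R) (x df dg : R) :
  is_derive f x df -> is_derive g x dg -> is_derive (fun y => f y * g y) x (df * g x + f x * dg).
Proof. intros Hf Hg. apply (is_derive_mult f g x df dg Hf Hg). intros; apply Rmult_comm. Qed.

Lemma is_derive_of_quadratic_remainder (F : R -> R) (t L K : R) :
  (forall h, Rabs h <= 1 -> Rabs (F (t + h) - F t - h * L) <= h ^ 2 * K) -> is_derive F t L.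
Proof.
  intros HF. apply is_derive_Reals. intros eps Heps.
  assert (Hd : 0 < Rmin 1 (eps / (Rabs K + 1)))
    by (apply Rmin_pos; [lra | apply Rdiv_lt_0_compat; [lra | pose proof (Rabs_pos K); lra]]).
  exists (mkposreal _ Hd). intros h Hh0 Hh. simpl in Hh.
  pose proof (Rmin_l 1 (eps / (Rabs K + 1))). pose proof (Rmin_r 1 (eps / (Rabs K + 1))).
  assert (Hah : 0 < Rabs h) by (apply Rabs_pos_lt; auto).
  specialize (HF h ltac:(lra)).
  replace ((F (t + h) - F t) / h - L) with ((F (t + h) - F t - h * L) / h) by (field; auto).
  unfold Rdiv. rewrite Rabs_mult, Rabs_inv.
  apply (Rmult_lt_reg_r (Rabs h)); [exact Hah |]. rewrite Rmult_assoc, Rinv_l, Rmult_1_r by lra.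
  assert (h ^ 2 * K <= Rabs K * Rabs h * Rabs h)
    by (rewrite <- (pow2_abs h); pose proof (Rle_abs K); nra).
  assert (Rabs K * Rabs h < eps).
  { apply Rle_lt_trans with (Rabs K * (eps / (Rabs K + 1))).
    - apply Rmult_le_compat_l; [apply Rabs_pos | lra].
    - pose proof (Rabs_pos K). apply (Rmult_lt_reg_r (Rabs K + 1)); [lra |].
      field_simplify; nra. }
  nra.
Qed.

Lemma Derive_n_2_of_is_derive (f g : R -> R) (t l : R) :
  (forall s, is_derive f s (g s)) -> is_derive g t l ->
  ex_derive_n f 2 t /\ Derive_n f 2 t = l.
Proof.
  intros Hf Hg. assert (Hfg : forall s, Derive f s = g s) by (intros; apply is_derive_unique, Hf).
  split.
  - apply (ex_derive_ext g); [intros; symmetry; apply Hfg | eexists; exact Hg].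
  - simpl. rewrite (Derive_ext _ g) by apply Hfg. apply is_derive_unique, Hg.
Qed.

Lemma continuous_pow (k : nat) (x : R) : continuous (fun y => y ^ k) x.
Proof.
  apply (ex_derive_continuous (K := R_AbsRing) (V := R_NormedModule)). auto_derive. auto.
Qed.

(** * The weight and its moments *)

Lemma exp_le_exp (x y : R) : x <= y -> exp x <= exp y.
Proof. intros [Hlt | ->]; [left; apply exp_increasing, Hlt | right; reflexivity]. Qed.

Lemma exp_pow_INR (a : R) (n : nat) : exp a ^ n = exp (INR n * a).
Proof.
  induction n as [|n IH]; [simpl; rewrite Rmult_0_l, exp_0; reflexivity |].
  rewrite S_INR, <- tech_pow_Rmult, IH, <- exp_plus. f_equal. ring.
Qed.

Lemma pow_le_exp (k : nat) (y : R) : 0 <= y -> y ^ k <= INR k ^ k * exp y.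
Proof.
  intros Hy. destruct k as [|k].
  - simpl. pose proof (exp_ineq1_le y). lra.
  - set (a := INR (S k)). assert (Ha : 0 < a) by (apply lt_0_INR; lia).
    assert (H1 : (y / a) ^ S k <= exp (y / a) ^ S k).
    { apply pow_incr. split; [apply Rdiv_le_0_compat; lra |].
      pose proof (exp_ineq1_le (y / a)). lra. }
    rewrite exp_pow_INR in H1. fold a in H1. replace (a * (y / a)) with y in H1 by (field; lra).
    replace (y ^ S k) with (a ^ S k * (y / a) ^ S k)
      by (rewrite <- Rpow_mult_distr; f_equal; field; lra).
    apply Rmult_le_compat_l; [apply pow_le; lra | exact H1].
Qed.

Lemma cubic_bounded_above (a b : R) : 0 <= a -> 0 <= b ->
  exists M, forall z, 0 <= z -> - z ^ 3 + a * z ^ 2 + b * z <= M.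
Proof.
  intros Ha Hb. set (K := a + b + 1). exists (a * K ^ 2 + b * K). intros z Hz.
  destruct (Rle_lt_dec z K) as [HzK | HzK].
  - assert (z ^ 2 <= K ^ 2) by (apply pow_incr; lra). nra.
  - assert (Hz1 : 1 <= z) by (unfold K in HzK; lra).
    assert (K * z ^ 2 <= z ^ 3) by nra.
    assert (0 <= a * K ^ 2 + b * K) by (unfold K; nra).
    unfold K in *. nra.
Qed.

Lemma omega_exponent_bounded_above (tau t : R) :
  exists M, forall x, Rabs x - x ^ 6 + tau * x ^ 4 + t * x ^ 2 <= M.
Proof.
  destruct (cubic_bounded_above (Rabs tau) (Rabs t + 1)) as [M HM];
    [apply Rabs_pos | pose proof (Rabs_pos t); lra |].
  exists (1 + M). intros x. specialize (HM (x ^ 2) (pow2_ge_0 x)).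
  assert (Hx : Rabs x <= 1 + x ^ 2) by (rewrite <- (pow2_abs x); nra).
  assert (tau * x ^ 4 <= Rabs tau * x ^ 4)
    by (apply Rmult_le_compat_r; [nra | apply Rle_abs]).
  assert (t * x ^ 2 <= Rabs t * x ^ 2)
    by (apply Rmult_le_compat_r; [nra | apply Rle_abs]).
  replace (x ^ 6) with ((x ^ 2) ^ 3) by ring.
  replace (x ^ 4) with ((x ^ 2) ^ 2) in * by ring. nra.
Qed.

Lemma omega_pos (tau t x : R) : 0 < omega tau t x.
Proof. apply exp_pos. Qed.

Lemma omega_shift (tau t h x : R) : omega tau (t + h) x = omega tau t x * exp (h * x ^ 2).
Proof. unfold omega. rewrite <- exp_plus. f_equal. ring. Qed.

Lemma is_derive_omega (tau t x : R) :
  is_derive (omega tau t) x (omega tau t x * (- 6 * x ^ 5 + 4 * tau * x ^ 3 + 2 * t * x)).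
Proof.
  unfold omega. auto_derive; auto.
  match goal with |- _ * exp ?B = exp ?B' * _ => replace B with B' by ring end. ring.
Qed.

Lemma continuous_omega (tau t x : R) : continuous (omega tau t) x.
Proof.
  apply (ex_derive_continuous (K := R_AbsRing) (V := R_NormedModule)).
  eexists. apply is_derive_omega.
Qed.

Lemma Rabs_pow_omega_bounded (tau t : R) (k : nat) :
  exists B, forall x, Rabs x ^ k * omega tau t x <= B.
Proof.
  destruct (omega_exponent_bounded_above tau t) as [M HM].
  exists (INR k ^ k * exp M). intros x.
  assert (Hk : 0 <= INR k ^ k) by (apply pow_le, pos_INR).
  eapply Rle_trans.
  { apply Rmult_le_compat_r; [left; apply omega_pos | apply pow_le_exp, Rabs_pos]. }
  rewrite Rmult_assoc. apply Rmult_le_compat_l; [exact Hk |].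
  unfold omega. rewrite <- exp_plus. apply exp_le_exp. specialize (HM x). lra.
Qed.

Lemma decaying_Rabs_pow_omega (tau t : R) (k : nat) :
  decaying (fun x => Rabs x ^ k * omega tau t x).
Proof.
  destruct (Rabs_pow_omega_bounded tau t k) as [B0 H0].
  destruct (Rabs_pow_omega_bounded tau t (k + 2)) as [B2 H2].
  exists (B0 + B2). intros x. specialize (H0 x). specialize (H2 x).
  rewrite Rabs_right
    by (apply Rle_ge, Rmult_le_pos; [apply pow_le, Rabs_pos | left; apply omega_pos]).
  rewrite pow_add, pow2_abs in H2. lra.
Qed.

Lemma decaying_pow_omega (tau t : R) (k : nat) : decaying (fun x => x ^ k * omega tau t x).
Proof.
  apply (decaying_le (fun x => Rabs x ^ k * omega tau t x)).
  - intros x. rewrite (Rabs_mult (x ^ k)), RPow_abs, (Rabs_right (omega tau t x))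
      by (left; apply omega_pos).
    apply Rle_abs.
  - apply decaying_Rabs_pow_omega.
Qed.

Definition moment (tau t : R) (k : nat) : R :=
  RInt_gen (fun x => x ^ k * omega tau t x) (Rbar_locally m_infty) (Rbar_locally p_infty).

Lemma is_RInt_R_moment (tau t : R) (k : nat) :
  is_RInt_R (fun x => x ^ k * omega tau t x) (moment tau t k).
Proof.
  apply is_RInt_R_RInt_gen, ex_RInt_gen_decaying.
  - intros x. apply (continuous_mult (fun y => y ^ k)); [apply continuous_pow |].
    apply continuous_omega.
  - apply decaying_pow_omega.
Qed.

Lemma is_RInt_R_zero : is_RInt_R (fun _ => 0) 0.
Proof.
  pose proof (is_RInt_R_scal _ 0 _ (is_RInt_R_moment 0 0 0)) as H0.
  rewrite Rmult_0_l in H0. exact (is_RInt_R_ext _ _ _ (fun x => Rmult_0_l _) H0).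
Qed.

Lemma Rabs_exp_sub_1_sub_le (u : R) : Rabs (exp u - 1 - u) <= u ^ 2 * exp (Rabs u).
Proof.
  pose proof (exp_ineq1_le u) as Hu. pose proof (exp_ineq1_le (- u)) as Hmu.
  assert (Hinv : exp u * exp (- u) = 1) by (rewrite <- exp_plus, Rplus_opp_r; apply exp_0).
  pose proof (exp_pos u) as Hpos. pose proof (exp_pos (- u)) as Hpos'.
  assert (Hupper : exp u - 1 - u <= u * (exp u - 1)) by nra.
  rewrite Rabs_right by lra.
  destruct (Rle_lt_dec 0 u) as [Hsign | Hsign].
  - rewrite Rabs_right by lra. nra.
  - rewrite Rabs_left by lra. nra.
Qed.

Lemma moment_integrand_remainder_le (tau t h : R) (k : nat) (x : R) : Rabs h <= 1 ->
  Rabs (x ^ k * omega tau (t + h) x - x ^ k * omega tau t x - h * (x ^ (k + 2) * omega tau t x))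
  <= h ^ 2 * (Rabs x ^ (k + 4) * omega tau (t + 1) x).
Proof.
  intros Hh. rewrite !omega_shift, !pow_add, RPow_abs.
  replace (x ^ k * (omega tau t x * exp (h * x ^ 2)) - x ^ k * omega tau t x
             - h * (x ^ k * x ^ 2 * omega tau t x))
    with (x ^ k * omega tau t x * (exp (h * x ^ 2) - 1 - h * x ^ 2)) by ring.
  set (w := Rabs (x ^ k) * omega tau t x).
  pose proof (omega_pos tau t x) as Hpos.
  assert (Hw : 0 <= w) by (pose proof (Rabs_pos (x ^ k)); unfold w; nra).
  assert (Hlhs : Rabs (x ^ k * omega tau t x) = w)
    by (unfold w; rewrite Rabs_mult, (Rabs_right (omega tau t x)) by lra; reflexivity).
  rewrite Rabs_mult, Hlhs.
  assert (Hexp : exp (Rabs (h * x ^ 2)) <= exp (1 * x ^ 2)).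
  { apply exp_le_exp. rewrite Rabs_mult, (Rabs_right (x ^ 2)) by (apply Rle_ge, pow2_ge_0).
    apply Rmult_le_compat_r; [apply pow2_ge_0 | exact Hh]. }
  pose proof (Rabs_exp_sub_1_sub_le (h * x ^ 2)) as Htaylor.
  pose proof (pow2_ge_0 (h * x ^ 2)).
  apply Rle_trans with (w * ((h * x ^ 2) ^ 2 * exp (1 * x ^ 2))).
  - apply Rmult_le_compat_l; [exact Hw |]. eapply Rle_trans; [exact Htaylor |].
    apply Rmult_le_compat_l; auto.
  - right. unfold w. replace (Rabs x ^ 4) with ((Rabs x ^ 2) ^ 2) by ring.
    rewrite pow2_abs. ring.
Qed.

Lemma is_derive_moment (tau t : R) (k : nat) :
  is_derive (fun s => moment tau s k) t (moment tau t (k + 2)).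
Proof.
  set (g := fun x => Rabs x ^ (k + 4) * omega tau (t + 1) x).
  assert (Hg : ex_RInt_gen g (Rbar_locally m_infty) (Rbar_locally p_infty)).
  { apply ex_RInt_gen_decaying; [| apply decaying_Rabs_pow_omega].
    intros x. apply (continuous_mult (fun y => Rabs y ^ (k + 4))); [| apply continuous_omega].
    apply (continuous_comp Rabs (fun y => y ^ (k + 4)));
      [apply continuous_Rabs | apply continuous_pow]. }
  apply (is_derive_of_quadratic_remainder _ _ _
           (RInt_gen g (Rbar_locally m_infty) (Rbar_locally p_infty))).
  intros h Hh.
  apply (is_RInt_R_Rabs_le (fun x => x ^ k * omega tau (t + h) x - x ^ k * omega tau t x
                                     - h * (x ^ (k + 2) * omega tau t x))
                           (fun x => h ^ 2 * g x)).
  - intros x. apply moment_integrand_remainder_le, Hh.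
  - apply is_RInt_R_minus; [apply is_RInt_R_minus | apply is_RInt_R_scal]; apply is_RInt_R_moment.
  - apply is_RInt_R_scal, is_RInt_R_RInt_gen, Hg.
Qed.

(** * Polynomials as coefficient sequences *)

Lemma psum_ext (c e : nat -> R) (d : nat) (x : R) :
  (forall j, (j < d)%nat -> c j = e j) -> psum c d x = psum e d x.
Proof.
  induction d as [|d IH]; intros H; simpl; [reflexivity |].
  rewrite IH by (intros; apply H; lia). rewrite H by lia. reflexivity.
Qed.

Lemma psum_sub_scal (c e : nat -> R) (a : R) (d : nat) (x : R) :
  psum (fun j => c j - a * e j) d x = psum c d x - a * psum e d x.
Proof. induction d as [|d IH]; simpl; [| rewrite IH]; ring. Qed.

Definition shift_coef (c : nat -> R) (j : nat) : R := match j with O => 0 | S j' => c j' end.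

Lemma psum_shift_coef (c : nat -> R) (d : nat) (x : R) :
  psum (shift_coef c) (S d) x = x * psum c d x.
Proof. induction d as [|d IH]; simpl in *; [| rewrite IH]; ring. Qed.

Lemma psum_pad (c : nat -> R) (d m : nat) (x : R) :
  (forall j, (d <= j)%nat -> c j = 0) -> psum c (m + d) x = psum c d x.
Proof. intros H. induction m as [|m IH]; simpl; [reflexivity |]. rewrite IH, H by lia. ring. Qed.

Definition deriv_coef (c : nat -> R) (j : nat) : R := INR (S j) * c (S j).

Lemma is_derive_psum (c : nat -> R) (d : nat) (x : R) :
  is_derive (psum c d) x (psum (deriv_coef c) (pred d) x).
Proof.
  induction d as [|d IH]; [apply is_derive_Rconst |].
  eapply is_derive_eq.
  - apply (is_derive_Rplus (psum c d)); [exact IH |].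
    apply is_derive_scal. apply (is_derive_pow (fun y => y) d x 1). apply (is_derive_id x).
  - destruct d as [|d]; cbn [pred psum]; [cbn [INR] | unfold deriv_coef]; ring.
Qed.

Lemma continuous_psum (c : nat -> R) (d : nat) (x : R) : continuous (psum c d) x.
Proof.
  apply (ex_derive_continuous (K := R_AbsRing) (V := R_NormedModule)).
  eexists. apply is_derive_psum.
Qed.

Fixpoint abs_coef_sum (c : nat -> R) (d : nat) : R :=
  match d with O => 0 | S d' => abs_coef_sum c d' + Rabs (c d') end.

Lemma abs_coef_sum_nonneg (c : nat -> R) (d : nat) : 0 <= abs_coef_sum c d.
Proof. induction d; simpl; [lra | pose proof (Rabs_pos (c d)); lra]. Qed.

Lemma psum_growth (c : nat -> R) (d : nat) (x : R) :
  1 <= x -> x * Rabs (psum c d x) <= abs_coef_sum c d * x ^ d.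
Proof.
  intros Hx. induction d as [|d IH]; simpl; [rewrite Rabs_R0; lra |].
  pose proof (Rabs_triang (psum c d x) (c d * x ^ d)) as Htri.
  rewrite Rabs_mult, (Rabs_right (x ^ d)) in Htri by (apply Rle_ge, pow_le; lra).
  pose proof (abs_coef_sum_nonneg c d). pose proof (Rabs_pos (c d)).
  assert (0 <= x ^ d) by (apply pow_le; lra).
  assert (abs_coef_sum c d * x ^ d <= abs_coef_sum c d * (x * x ^ d))
    by (apply Rmult_le_compat_l; nra).
  nra.
Qed.

Lemma monic_psum_nonzero (c : nat -> R) (k : nat) : exists x, x ^ k + psum c k x <> 0.
Proof.
  set (X := 1 + abs_coef_sum c k). exists X.
  pose proof (abs_coef_sum_nonneg c k).
  pose proof (psum_growth c k X ltac:(unfold X; lra)) as HG.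
  assert (HXk : 0 < X ^ k) by (apply pow_lt; unfold X; lra).
  assert (Hlt : X * Rabs (psum c k X) < X * X ^ k) by (unfold X in *; nra).
  apply Rmult_lt_reg_l in Hlt; [| unfold X; lra].
  intros Heq. replace (psum c k X) with (- X ^ k) in Hlt by lra.
  rewrite Rabs_Ropp, Rabs_right in Hlt by lra. lra.
Qed.

Fixpoint psum_moment (tau t : R) (e : nat -> R) (d k : nat) : R :=
  match d with
  | O => 0
  | S d' => psum_moment tau t e d' k + e d' * moment tau t (k + d')
  end.

Fixpoint psum_pair (tau t : R) (c : nat -> R) (d1 : nat) (e : nat -> R) (d2 m : nat) : R :=
  match d1 with
  | O => 0
  | S d' => psum_pair tau t c d' e d2 m + c d' * psum_moment tau t e d2 (d' + m)
  end.

Lemma is_RInt_R_psum_moment (tau t : R) (e : nat -> R) (d k : nat) :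
  is_RInt_R (fun x => x ^ k * psum e d x * omega tau t x) (psum_moment tau t e d k).
Proof.
  induction d as [|d IH]; simpl.
  - apply (is_RInt_R_ext (fun _ => 0)); [intros; ring | apply is_RInt_R_zero].
  - pose proof (is_RInt_R_scal _ (e d) _ (is_RInt_R_moment tau t (k + d))) as Hd.
    eapply is_RInt_R_ext; [| exact (is_RInt_R_plus _ _ _ _ IH Hd)].
    intros x. simpl. rewrite pow_add. ring.
Qed.

Lemma is_RInt_R_psum_pair (tau t : R) (c e : nat -> R) (d1 d2 m : nat) :
  is_RInt_R (fun x => psum c d1 x * psum e d2 x * x ^ m * omega tau t x)
            (psum_pair tau t c d1 e d2 m).
Proof.
  induction d1 as [|d IH]; simpl.
  - apply (is_RInt_R_ext (fun _ => 0)); [intros; ring | apply is_RInt_R_zero].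
  - pose proof (is_RInt_R_scal _ (c d) _ (is_RInt_R_psum_moment tau t e d2 (d + m))) as Hd.
    eapply is_RInt_R_ext; [| exact (is_RInt_R_plus _ _ _ _ IH Hd)].
    intros x. simpl. rewrite pow_add. ring.
Qed.

Lemma psum_pair_sym (tau t : R) (c e : nat -> R) (d1 d2 m : nat) :
  psum_pair tau t c d1 e d2 m = psum_pair tau t e d2 c d1 m.
Proof.
  eapply is_RInt_R_unique; [apply is_RInt_R_psum_pair |].
  eapply is_RInt_R_ext; [| apply is_RInt_R_psum_pair]. intros; simpl; ring.
Qed.

Lemma is_derive_psum_moment (tau t : R) (e : R -> nat -> R) (e' : nat -> R) (d k : nat) :
  (forall j, is_derive (fun s => e s j) t (e' j)) ->
  is_derive (fun s => psum_moment tau s (e s) d k) t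
    (psum_moment tau t e' d k + psum_moment tau t (e t) d (k + 2)).
Proof.
  intros He. induction d as [|d IH]; simpl.
  - eapply is_derive_eq; [apply is_derive_Rconst | ring].
  - eapply is_derive_eq.
    { apply is_derive_Rplus; [exact IH |].
      apply is_derive_Rmult; [apply He | apply is_derive_moment]. }
    replace (k + 2 + d)%nat with (k + d + 2)%nat by lia. ring.
Qed.

Lemma is_derive_psum_pair (tau t : R) (c e : R -> nat -> R) (c' e' : nat -> R) (d1 d2 m : nat) :
  (forall j, is_derive (fun s => c s j) t (c' j)) ->
  (forall j, is_derive (fun s => e s j) t (e' j)) ->
  is_derive (fun s => psum_pair tau s (c s) d1 (e s) d2 m) t
    (psum_pair tau t c' d1 (e t) d2 m + psum_pair tau t (c t) d1 e' d2 m
     + psum_pair tau t (c t) d1 (e t) d2 (m + 2)).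
Proof.
  intros Hc He. induction d1 as [|d IH]; simpl.
  - eapply is_derive_eq; [apply is_derive_Rconst | ring].
  - eapply is_derive_eq.
    { apply is_derive_Rplus; [exact IH | apply is_derive_Rmult; [apply Hc |]].
      exact (is_derive_psum_moment tau t e e' d2 (d + m) He). }
    replace (d + (m + 2))%nat with (d + m + 2)%nat by lia. ring.
Qed.

Lemma decaying_pow_psum_omega (tau t : R) (e : nat -> R) (d m : nat) :
  decaying (fun x => x ^ m * psum e d x * omega tau t x).
Proof.
  induction d as [|d IH].
  - apply (decaying_ext (fun x => 0 * (x ^ 0 * omega tau t x))); [intros; simpl; ring |].
    apply decaying_scal, decaying_pow_omega.
  - apply (decaying_ext (fun x => x ^ m * psum e d x * omega tau t x
                                  + e d * (x ^ (m + d) * omega tau t x))).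
    + intros x. simpl. rewrite pow_add. ring.
    + apply decaying_plus; [exact IH | apply decaying_scal, decaying_pow_omega].
Qed.

Lemma decaying_psum_psum_omega (tau t : R) (c e : nat -> R) (d1 d2 : nat) :
  decaying (fun x => psum c d1 x * psum e d2 x * omega tau t x).
Proof.
  induction d1 as [|d IH].
  - apply (decaying_ext (fun x => 0 * (x ^ 0 * omega tau t x))); [intros; simpl; ring |].
    apply decaying_scal, decaying_pow_omega.
  - apply (decaying_ext (fun x => psum c d x * psum e d2 x * omega tau t x
                                  + c d * (x ^ d * psum e d2 x * omega tau t x))).
    + intros x. simpl. ring.
    + apply decaying_plus; [exact IH | apply decaying_scal, decaying_pow_psum_omega].
Qed.

(* Integrate [(p q omega)'] over the line, with [omega' = (- 6 x^5 + 4 tau x^3 + 2 t x) omega]. *)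
Lemma psum_pair_ibp (tau t : R) (c e : nat -> R) (d1 d2 : nat) :
  psum_pair tau t (deriv_coef c) (pred d1) e d2 0 + psum_pair tau t c d1 (deriv_coef e) (pred d2) 0
  = 6 * psum_pair tau t c d1 e d2 5 - 4 * tau * psum_pair tau t c d1 e d2 3
    - 2 * t * psum_pair tau t c d1 e d2 1.
Proof.
  pose proof (is_RInt_R_psum_pair tau t c e d1 d2) as Hce.
  pose proof (is_RInt_R_minus _ _ _ _
    (is_RInt_R_plus _ _ _ _ (is_RInt_R_psum_pair tau t (deriv_coef c) e (pred d1) d2 0)
                            (is_RInt_R_psum_pair tau t c (deriv_coef e) d1 (pred d2) 0))
    (is_RInt_R_minus _ _ _ _
      (is_RInt_R_minus _ _ _ _ (is_RInt_R_scal _ 6 _ (Hce 5%nat))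
                               (is_RInt_R_scal _ (4 * tau) _ (Hce 3%nat)))
      (is_RInt_R_scal _ (2 * t) _ (Hce 1%nat)))) as Hvalue.
  apply Rminus_diag_uniq.
  refine (is_RInt_R_derive_decaying (fun x => psum c d1 x * psum e d2 x * omega tau t x)
            _ _ _ _ _ Hvalue).
  - intros x. eapply is_derive_eq.
    + apply is_derive_Rmult; [apply is_derive_Rmult; apply is_derive_psum | apply is_derive_omega].
    + cbv beta. ring.
  - intros x. apply (ex_derive_continuous (K := R_AbsRing) (V := R_NormedModule)).
    unfold omega. auto_derive. repeat split; eexists; apply is_derive_psum.
  - apply decaying_psum_psum_omega.
Qed.

(** * Three-term recurrences and weighted walks *)

Definition unit_coef (j : nat) : R := if Nat.eqb j 0 then 1 else 0.

(* [rec_coef b k] is the coefficient sequence of [p_k], where [p_0 = 1] and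
   [p_(k+1) = x p_k - b_k p_(pred k)]; the recursion carries the pair [(p_k, p_(pred k))]. *)
Fixpoint rec_coef_pair (b : nat -> R) (k : nat) : (nat -> R) * (nat -> R) :=
  match k with
  | O => (unit_coef, unit_coef)
  | S k' => let (p, q) := rec_coef_pair b k' in (fun j => shift_coef p j - b k' * q j, p)
  end.

Definition rec_coef (b : nat -> R) (k : nat) : nat -> R := fst (rec_coef_pair b k).

Lemma rec_coef_S (b : nat -> R) (k j : nat) :
  rec_coef b (S k) j = shift_coef (rec_coef b k) j - b k * rec_coef b (pred k) j.
Proof.
  unfold rec_coef. simpl. destruct (rec_coef_pair b k) as [p q] eqn:E. simpl.
  destruct k as [|k]; simpl in *.
  - injection E as <- <-. reflexivity.
  - destruct (rec_coef_pair b k) as [p' q']. injection E as <- <-. reflexivity.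
Qed.

Lemma rec_coef_high (b : nat -> R) (k j : nat) : (k < j)%nat -> rec_coef b k j = 0.
Proof.
  revert j. induction k as [k IH] using lt_wf_ind. intros j Hj. destruct k as [|k].
  - unfold rec_coef, unit_coef. simpl. destruct j; [lia | reflexivity].
  - rewrite rec_coef_S. destruct j as [|j]; [lia |]. simpl.
    rewrite (IH k), (IH (pred k)) by lia. ring.
Qed.

Lemma rec_coef_top (b : nat -> R) (k : nat) : rec_coef b k k = 1.
Proof.
  induction k as [|k IH]; [reflexivity |].
  rewrite rec_coef_S. simpl. rewrite IH, rec_coef_high by lia. ring.
Qed.

Fixpoint jacobi_walk (b : Z -> R) (m : nat) (i j : Z) : R :=
  match m with
  | O => if Z.eqb i j then 1 else 0
  | S m' => jacobi_walk b m' (i + 1) j + b i * jacobi_walk b m' (i - 1) j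
  end.

Lemma jacobi_walk_shift (b : Z -> R) (z : Z) (m : nat) (i j : Z) :
  jacobi_walk b m (z + i) (z + j) = jacobi_walk (fun o => b (z + o)%Z) m i j.
Proof.
  revert i. induction m as [|m IH]; intros i; simpl.
  - destruct (Z.eqb_spec (z + i) (z + j)), (Z.eqb_spec i j); auto; lia.
  - replace (z + i + 1)%Z with (z + (i + 1))%Z by lia.
    replace (z + i - 1)%Z with (z + (i - 1))%Z by lia.
    rewrite !IH. reflexivity.
Qed.

Lemma Z2Nat_of_nat_add_pos (n : nat) (p : positive) :
  Z.to_nat (Z.of_nat n + Z.pos p) = Pos.iter S n p.
Proof.
  induction p as [|p IH] using Pos.peano_ind; [simpl; lia |].
  rewrite Pos.iter_succ, <- IH. lia.
Qed.

Lemma Z2Nat_of_nat_add_neg (n : nat) (p : positive) :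
  Z.to_nat (Z.of_nat n + Z.neg p) = Pos.iter pred n p.
Proof.
  induction p as [|p IH] using Pos.peano_ind; [simpl; lia |].
  rewrite Pos.iter_succ, <- IH. lia.
Qed.

(** * Orthogonal polynomials of the weight *)

Section OrthogonalPolynomials.

Variables (tau : R) (P : R -> nat -> R -> R) (beta : R -> nat -> R).
Hypothesis P_monic : forall t n, monic_poly_fun n (P t n).
Hypothesis P_orthogonal : forall t m n, m <> n ->
  is_RInt_R (fun x => P t m x * P t n x * omega tau t x) 0.
Hypothesis beta_0 : forall t, beta t 0%nat = 0.
Hypothesis P_rec_0 : forall t x, P t 1%nat x = x * P t 0%nat x.
Hypothesis P_rec_S : forall t n x, (1 <= n)%nat ->
  P t (S n) x = x * P t n x - beta t n * P t (n - 1)%nat x.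

Lemma P_rec (t : R) (k : nat) (x : R) :
  P t (S k) x = x * P t k x - beta t k * P t (pred k) x.
Proof.
  destruct k as [|k].
  - rewrite P_rec_0, beta_0. ring.
  - rewrite P_rec_S by lia. simpl. rewrite Nat.sub_0_r. reflexivity.
Qed.

Lemma P_psum (t : R) (k : nat) (x : R) : P t k x = psum (rec_coef (beta t) k) (S k) x.
Proof.
  revert x. induction k as [k IH] using lt_wf_ind. intros x. destruct k as [|k].
  - destruct (P_monic t 0) as [c Hc]. rewrite Hc. simpl.
    cbv [rec_coef rec_coef_pair fst unit_coef Nat.eqb]. ring.
  - rewrite P_rec, (IH k), (IH (pred k)) by lia.
    rewrite (psum_ext (rec_coef (beta t) (S k))
               (fun j => shift_coef (rec_coef (beta t) k) j
                         - beta t k * rec_coef (beta t) (pred k) j))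
      by (intros; apply rec_coef_S).
    rewrite psum_sub_scal, psum_shift_coef.
    replace (S (S k)) with (S (S k) - S (pred k) + S (pred k))%nat by lia.
    rewrite psum_pad; [reflexivity |]. intros j Hj. apply rec_coef_high. lia.
Qed.

Definition ortho_moment (t : R) (i j m : nat) : R :=
  psum_pair tau t (rec_coef (beta t) i) (S i) (rec_coef (beta t) j) (S j) m.

Definition sqnorm (t : R) (k : nat) : R := ortho_moment t k k 0.

Lemma is_RInt_R_ortho_moment (t : R) (i j m : nat) :
  is_RInt_R (fun x => P t i x * P t j x * x ^ m * omega tau t x) (ortho_moment t i j m).
Proof.
  eapply is_RInt_R_ext; [| apply is_RInt_R_psum_pair].
  intros x. cbv beta. rewrite !P_psum. reflexivity.
Qed.

Lemma ortho_moment_orth (t : R) (i j : nat) : i <> j -> ortho_moment t i j 0 = 0.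
Proof.
  intros Hij. apply (is_RInt_R_unique (fun x => P t i x * P t j x * x ^ 0 * omega tau t x)).
  - apply is_RInt_R_ortho_moment.
  - eapply is_RInt_R_ext; [| exact (P_orthogonal t i j Hij)]. intros x. simpl. ring.
Qed.

Lemma ortho_moment_sym (t : R) (i j m : nat) : ortho_moment t i j m = ortho_moment t j i m.
Proof. apply psum_pair_sym. Qed.

Lemma ortho_moment_S (t : R) (i j m : nat) :
  ortho_moment t i j (S m) = ortho_moment t (S i) j m + beta t i * ortho_moment t (pred i) j m.
Proof.
  eapply is_RInt_R_unique; [apply is_RInt_R_ortho_moment |].
  eapply is_RInt_R_ext;
    [| apply is_RInt_R_plus; [| apply is_RInt_R_scal]; apply is_RInt_R_ortho_moment].
  intros x. cbv beta. rewrite P_rec. simpl. ring.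
Qed.

Lemma ortho_moment_walk (t : R) (m i j : nat) :
  ortho_moment t i j m
  = jacobi_walk (fun z => beta t (Z.to_nat z)) m (Z.of_nat i) (Z.of_nat j) * sqnorm t j.
Proof.
  revert i. induction m as [|m IH]; intros i; simpl.
  - destruct (Nat.eq_dec i j) as [<- | Hij].
    + rewrite Z.eqb_refl. unfold sqnorm. ring.
    + rewrite ortho_moment_orth by exact Hij.
      replace (Z.of_nat i =? Z.of_nat j)%Z with false by (symmetry; apply Z.eqb_neq; lia). ring.
  - rewrite ortho_moment_S, !IH, Nat2Z.id, Nat2Z.inj_succ. unfold Z.succ.
    destruct i as [|i]; [rewrite beta_0; ring |].
    replace (Z.of_nat (pred (S i))) with (Z.of_nat (S i) - 1)%Z by lia. ring.
Qed.

(* Integer offsets from a symbolic index [n], so that walks with concrete endpoints compute. *)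
Definition beta_shift (t : R) (n : nat) (o : Z) : R := beta t (Z.to_nat (Z.of_nat n + o)).

Lemma beta_shift_0 (t : R) (n : nat) : beta_shift t n 0 = beta t n.
Proof. unfold beta_shift. rewrite Z.add_0_r, Nat2Z.id. reflexivity. Qed.

Lemma beta_shift_pos (t : R) (n : nat) (p : positive) :
  beta_shift t n (Z.pos p) = beta t (Pos.iter S n p).
Proof. unfold beta_shift. rewrite Z2Nat_of_nat_add_pos. reflexivity. Qed.

Lemma beta_shift_neg (t : R) (n : nat) (p : positive) :
  beta_shift t n (Z.neg p) = beta t (Pos.iter pred n p).
Proof. unfold beta_shift. rewrite Z2Nat_of_nat_add_neg. reflexivity. Qed.

Lemma ortho_moment_shift (t : R) (i j m : nat) :
  ortho_moment t i j m = jacobi_walk (beta_shift t j) m (Z.of_nat i - Z.of_nat j) 0 * sqnorm t j.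
Proof.
  rewrite ortho_moment_walk. f_equal. unfold beta_shift.
  rewrite <- (jacobi_walk_shift (fun z => beta t (Z.to_nat z)) (Z.of_nat j)).
  f_equal; lia.
Qed.

Lemma ortho_moment_diag_2 (t : R) (k : nat) :
  ortho_moment t k k 2 = (beta t (S k) + beta t k) * sqnorm t k.
Proof.
  rewrite ortho_moment_shift, Z.sub_diag. f_equal. simpl.
  rewrite beta_shift_0, beta_shift_pos. simpl. ring.
Qed.

Lemma ortho_moment_pred_1 (t : R) (n : nat) : ortho_moment t n (S n) 1 = sqnorm t (S n).
Proof.
  rewrite ortho_moment_shift. replace (Z.of_nat n - Z.of_nat (S n))%Z with (-1)%Z by lia.
  simpl. ring.
Qed.

Lemma ortho_moment_succ (t : R) (n m : nat) :
  ortho_moment t (S n) n m = jacobi_walk (beta_shift t n) m 1 0 * sqnorm t n.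
Proof.
  rewrite ortho_moment_shift. replace (Z.of_nat (S n) - Z.of_nat n)%Z with 1%Z by lia. reflexivity.
Qed.

Lemma ortho_moment_succ_1 (t : R) (n : nat) :
  ortho_moment t (S n) n 1 = beta t (S n) * sqnorm t n.
Proof. rewrite ortho_moment_succ. f_equal. simpl. rewrite beta_shift_pos. simpl. ring. Qed.

Lemma ortho_moment_succ_3 (t : R) (n : nat) :
  ortho_moment t (S n) n 3
  = beta t (S n) * (beta t n + beta t (S n) + beta t (S (S n))) * sqnorm t n.
Proof.
  rewrite ortho_moment_succ. f_equal. simpl.
  rewrite ?beta_shift_0, ?beta_shift_pos, ?beta_shift_neg. simpl. ring.
Qed.

Lemma ortho_moment_succ_5 (t : R) (n : nat) :
  ortho_moment t (S n) n 5 = beta t (S n)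
    * (beta t (S (S n)) * beta t (S (S (S n))) + beta t (S (S n)) ^ 2
       + 2 * beta t (S n) * beta t (S (S n)) + beta t (S n) ^ 2 + beta t n * beta t (S (S n))
       + 2 * beta t n * beta t (S n) + beta t n ^ 2 + beta t (pred n) * beta t n)
    * sqnorm t n.
Proof.
  rewrite ortho_moment_succ. f_equal. simpl.
  rewrite ?beta_shift_0, ?beta_shift_pos, ?beta_shift_neg. simpl. ring.
Qed.

Lemma beta_mul_sqnorm (t : R) (k : nat) : beta t (S k) * sqnorm t k = sqnorm t (S k).
Proof. rewrite <- ortho_moment_succ_1, ortho_moment_sym. apply ortho_moment_pred_1. Qed.

Lemma psum_moment_rec_coef (t : R) (d k : nat) :
  psum_moment tau t (rec_coef (beta t) k) (S k) d
  = ortho_moment t d k 0 - psum_pair tau t (rec_coef (beta t) d) d (rec_coef (beta t) k) (S k) 0.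
Proof.
  eapply is_RInt_R_unique; [apply is_RInt_R_psum_moment |].
  eapply is_RInt_R_ext; [| apply is_RInt_R_minus; apply is_RInt_R_psum_pair].
  intros x. simpl. rewrite rec_coef_top. ring.
Qed.

Lemma psum_pair_orth_low (t : R) (k d : nat) (c : nat -> R) : (d <= k)%nat ->
  psum_pair tau t c d (rec_coef (beta t) k) (S k) 0 = 0.
Proof.
  revert c. induction d as [|d IH]; intros c Hd; [reflexivity |]. cbn [psum_pair].
  rewrite IH, Nat.add_0_r, psum_moment_rec_coef, IH, ortho_moment_orth by lia. ring.
Qed.

Lemma psum_moment_top (t : R) (k : nat) :
  psum_moment tau t (rec_coef (beta t) k) (S k) k = sqnorm t k.
Proof. rewrite psum_moment_rec_coef, psum_pair_orth_low by lia. unfold sqnorm. ring. Qed.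

Lemma sqnorm_pos (t : R) (k : nat) : 0 < sqnorm t k.
Proof.
  destruct (monic_psum_nonzero (rec_coef (beta t) k) k) as [x0 Hx0].
  apply (is_RInt_R_gt0 (fun x => P t k x * P t k x * x ^ 0 * omega tau t x) x0);
    [| | | apply is_RInt_R_ortho_moment].
  - intros x. apply (continuous_ext (fun x => psum (rec_coef (beta t) k) (S k) x
                                             * psum (rec_coef (beta t) k) (S k) x * omega tau t x)).
    + intros y. rewrite !P_psum. simpl. ring.
    + set (p := psum (rec_coef (beta t) k) (S k)).
      apply (continuous_mult (fun y => p y * p y) (omega tau t)); [| apply continuous_omega].
      apply (continuous_mult p p); apply continuous_psum.
  - intros x. pose proof (omega_pos tau t x). simpl. nra.
  - rewrite P_psum. simpl. rewrite rec_coef_top.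
    pose proof (omega_pos tau t x0).
    assert (0 < (x0 ^ k + psum (rec_coef (beta t) k) k x0) ^ 2)
      by (apply pow2_gt_0; exact Hx0).
    nra.
Qed.

Definition coef_derivable (k : nat) : Prop :=
  forall j t, ex_derive (fun s => rec_coef (beta s) k j) t.

Lemma is_derive_sqnorm (t : R) (k : nat) : coef_derivable k ->
  is_derive (fun s => sqnorm s k) t ((beta t (S k) + beta t k) * sqnorm t k).
Proof.
  (* [d/dt P_k] has degree [< k], so only the term [int x^2 P_k^2 omega] survives. *)
  intros Hk. set (c' := fun j => Derive (fun s => rec_coef (beta s) k j) t).
  assert (Hc' : forall j, is_derive (fun s => rec_coef (beta s) k j) t (c' j))
    by (intros; apply Derive_correct, Hk).
  assert (Htop : c' k = 0).
  { unfold c'. rewrite (Derive_ext _ (fun _ => 1)) by (intros; apply rec_coef_top).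
    apply Derive_const. }
  assert (Hlow : psum_pair tau t c' (S k) (rec_coef (beta t) k) (S k) 0 = 0).
  { cbn [psum_pair]. rewrite Htop, psum_pair_orth_low by lia. ring. }
  eapply is_derive_eq; [apply (is_derive_psum_pair tau t _ _ _ _ _ _ _ Hc' Hc') |].
  change (fun j => rec_coef (beta t) k j) with (rec_coef (beta t) k).
  rewrite Hlow, (psum_pair_sym tau t (rec_coef (beta t) k)), Hlow.
  change (psum_pair tau t _ (S k) _ (S k) (0 + 2)) with (ortho_moment t k k 2).
  rewrite ortho_moment_diag_2. ring.
Qed.

Lemma is_derive_beta_of_coef_derivable (t : R) (k : nat) :
  coef_derivable k -> coef_derivable (pred k) ->
  is_derive (fun s => beta s k) t (beta t k * (beta t (S k) - beta t (pred k))).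
Proof.
  intros Hk Hk'. destruct k as [|k].
  - apply (is_derive_Rext (fun _ => 0)); [intros; symmetry; apply beta_0 |].
    rewrite beta_0, Rmult_0_l. apply is_derive_Rconst.
  - pose proof (sqnorm_pos t k) as Hpos.
    apply (is_derive_Rext (fun s => sqnorm s (S k) / sqnorm s k)).
    { intros s. rewrite <- beta_mul_sqnorm. field. apply Rgt_not_eq, sqnorm_pos. }
    eapply is_derive_eq.
    + apply (is_derive_div _ _ t _ _ (is_derive_sqnorm t (S k) Hk) (is_derive_sqnorm t k Hk')). lra.
    + rewrite <- beta_mul_sqnorm. simpl. field. lra.
Qed.

Lemma coef_derivable_S (k : nat) :
  coef_derivable k -> coef_derivable (pred k) -> coef_derivable (S k).
Proof.
  intros Hk Hk' j t.
  apply (ex_derive_ext (K := R_AbsRing) (V := R_NormedModule)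
           (fun s => shift_coef (rec_coef (beta s) k) j - beta s k * rec_coef (beta s) (pred k) j)).
  { intros s. symmetry. apply rec_coef_S. }
  apply (ex_derive_minus (K := R_AbsRing) (V := R_NormedModule)).
  - destruct j as [|j]; simpl; [| apply Hk].
    apply (ex_derive_const (K := R_AbsRing) (V := R_NormedModule)).
  - apply ex_derive_mult; [eexists; apply is_derive_beta_of_coef_derivable; auto | apply Hk'].
Qed.

Lemma coef_derivable_all (k : nat) : coef_derivable k.
Proof.
  induction k as [k IH] using lt_wf_ind. destruct k as [|k].
  - intros j t. exists 0. exact (is_derive_Rconst (unit_coef j) t).
  - apply coef_derivable_S; apply IH; lia.
Qed.

Lemma is_derive_beta (t : R) (k : nat) :
  is_derive (fun s => beta s k) t (beta t k * (beta t (S k) - beta t (pred k))).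
Proof. apply is_derive_beta_of_coef_derivable; apply coef_derivable_all. Qed.

Lemma Derive_beta (t : R) (k : nat) :
  Derive (fun s => beta s k) t = beta t k * (beta t (S k) - beta t (pred k)).
Proof. apply is_derive_unique, is_derive_beta. Qed.

Lemma Derive_n_2_beta (t : R) (n : nat) :
  ex_derive_n (fun s => beta s (S n)) 2 t /\
  Derive_n (fun s => beta s (S n)) 2 t
  = beta t (S n) * (beta t (S (S n)) - beta t n) ^ 2
    + beta t (S n) * (beta t (S (S n)) * (beta t (S (S (S n))) - beta t (S n))
                      - beta t n * (beta t (S n) - beta t (pred n))).
Proof.
  apply (Derive_n_2_of_is_derive _ (fun s => beta s (S n) * (beta s (S (S n)) - beta s n))).
  - intros s. apply (is_derive_beta s (S n)).
  - eapply is_derive_eq.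
    + apply is_derive_Rmult; [apply (is_derive_beta t (S n)) |].
      apply is_derive_Rminus; apply is_derive_beta.
    + simpl. ring.
Qed.

Lemma string_equation (t : R) (n : nat) :
  INR (S n) = beta t (S n)
    * (6 * (beta t (S (S n)) * beta t (S (S (S n))) + beta t (S (S n)) ^ 2
            + 2 * beta t (S n) * beta t (S (S n)) + beta t (S n) ^ 2 + beta t n * beta t (S (S n))
            + 2 * beta t n * beta t (S n) + beta t n ^ 2 + beta t (pred n) * beta t n)
       - 4 * tau * (beta t n + beta t (S n) + beta t (S (S n))) - 2 * t).
Proof.
  (* Against [P_n], only the leading term [(n + 1) x^n] of [P_(n+1)'] contributes. *)
  pose proof (psum_pair_ibp tau t (rec_coef (beta t) (S n)) (rec_coef (beta t) n) (S (S n)) (S n))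
    as Hibp.
  cbn [pred] in Hibp.
  assert (Hderiv : psum_pair tau t (deriv_coef (rec_coef (beta t) (S n))) (S n)
                              (rec_coef (beta t) n) (S n) 0 = INR (S n) * sqnorm t n).
  { cbn [psum_pair]. rewrite psum_pair_orth_low, Nat.add_0_r, psum_moment_top by lia.
    unfold deriv_coef. rewrite rec_coef_top. ring. }
  assert (Hlow : psum_pair tau t (rec_coef (beta t) (S n)) (S (S n))
                           (deriv_coef (rec_coef (beta t) n)) n 0 = 0)
    by (rewrite psum_pair_sym; apply psum_pair_orth_low; lia).
  rewrite Hderiv, Hlow, Rplus_0_r in Hibp.
  change (psum_pair tau t (rec_coef (beta t) (S n)) (S (S n)) (rec_coef (beta t) n) (S n) ?m)
    with (ortho_moment t (S n) n m) in Hibp.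
  rewrite ortho_moment_succ_1, ortho_moment_succ_3, ortho_moment_succ_5 in Hibp.
  apply (Rmult_eq_reg_r (sqnorm t n)); [| apply Rgt_not_eq, sqnorm_pos].
  rewrite Hibp. ring.
Qed.

End OrthogonalPolynomials.

Theorem lemma3p3 (tau : R) (P : R -> nat -> R -> R) (beta : R -> nat -> R)
  (Hmonic : forall t n, monic_poly_fun n (P t n))
  (Horth : forall t m n, m <> n ->
     is_RInt_R (fun x => P t m x * P t n x * omega tau t x) 0)
  (Hbeta0 : forall t, beta t 0%nat = 0)
  (Hrec0 : forall t x, P t 1%nat x = x * P t 0%nat x)
  (Hrec : forall t n x, (1 <= n)%nat ->
     P t (S n) x = x * P t n x - beta t n * P t (n - 1)%nat x) :
  forall (t : R) (n : nat), (1 <= n)%nat ->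
    let b0 := fun s => beta s n in
    let b1 := fun s => beta s (S n) in
    ex_derive b0 t /\ ex_derive_n b0 2 t /\
    ex_derive b1 t /\ ex_derive_n b1 2 t /\
    Derive_n b0 2 t - 3 * (b0 t + b1 t - 2 / 9 * tau) * Derive b0 t
      + b0 t ^ 3 + 6 * b0 t ^ 2 * b1 t + 3 * b0 t * b1 t ^ 2
      - 2 / 3 * tau * b0 t * (b0 t + 2 * b1 t) - 1 / 3 * t * b0 t
      = 1 / 6 * INR n /\
    Derive_n b1 2 t + 3 * (b0 t + b1 t - 2 / 9 * tau) * Derive b1 t
      + b1 t ^ 3 + 6 * b1 t ^ 2 * b0 t + 3 * b1 t * b0 t ^ 2
      - 2 / 3 * tau * b1 t * (2 * b0 t + b1 t) - 1 / 3 * t * b1 t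
      = 1 / 6 * INR (n + 1).
Proof.
  intros t n Hn b0 b1; subst b0 b1. destruct n as [|m]; [lia |].
  pose proof (is_derive_beta tau P beta Hmonic Horth Hbeta0 Hrec0 Hrec t) as Htoda.
  pose proof (Derive_n_2_beta tau P beta Hmonic Horth Hbeta0 Hrec0 Hrec t) as Htoda2.
  pose proof (Derive_beta tau P beta Hmonic Horth Hbeta0 Hrec0 Hrec t) as Hderive.
  pose proof (string_equation tau P beta Hmonic Horth Hbeta0 Hrec0 Hrec t) as Hstring.
  destruct (Htoda2 m) as [Hex0 ->], (Htoda2 (S m)) as [Hex1 ->].
  rewrite !Hderive.
  replace (S m + 1)%nat with (S (S m)) by lia. rewrite (Hstring m), (Hstring (S m)).
  repeat split; [eexists; apply Htoda | exact Hex0 | eexists; apply Htoda | exact Hex1 | |];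
    simpl; field.
Qed.
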